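(* Let $p$ be the characteristic of $\mathbb{F}_q$, $t\ge1$, $l\ge1$ with $\gcd(l,p)=1$, and $m=lp^t$, so that $x^{m}-1=\prod_{s\in T_l}M_s(x)^{p^t}$. Let $v_1,v_2\in\mathcal{R}=\mathbb{F}_q[x]/(x^m-1)$ with $\gcd(v_1v_2-1,x^m-1)=1$, and for each $s\in T_l$ let $r_{1s},r_{2s}$ be integers with $0<r_{1s}<r_{2s}<p^t-r_{2(-s)}$. Let $\mathcal{C}$ be the QC code of length $2m$ generated by $\big(\prod_{s}M_s^{r_{1s}},\,v_1\prod_sM_s^{r_{1s}}\big)$ and $\big(v_2\prod_sM_s^{r_{2s}},\,\prod_sM_s^{r_{2s}}\big)$ (products over $s\in T_l$). Then $\mathcal{C}^{\perp_E}$ is the QC code generated by $\big(\prod_sM_s^{p^t-r_{1(-s)}},\,-\overline{v_2}\prod_sM_s^{p^t-r_{1(-s)}}\big)$ and $\big(-\overline{v_1}\prod_sM_s^{p^t-r_{2(-s)}},\,\prod_sM_s^{p^t-r_{2(-s)}}\big)$, and $\mathcal{C}^{\perp_E}\subseteq\mathcal{C}$.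
   Context: For an integer $s$, the $q$-cyclotomic coset modulo $l$ containing $s$ is $C_{(s,l)}=\{s,sq,\dots,sq^{i_s-1}\}\bmod l$, $i_s$ minimal with $sq^{i_s}\equiv s\pmod l$; $T_l$ is the set of smallest representatives of these cosets. For an integer $s$, $r_{i(-s)}$ denotes $r_{i s'}$ where $s'\in T_l$ is the representative of the coset containing $-s \bmod l$. With $\alpha$ a primitive $l$-th root of unity, $M_s(x)=\prod_{i\in C_{(s,l)}}(x-\alpha^i)$. Elements of $\mathcal{R}$ are identified with representatives of degree $<m$; $[k]=(k_0,\dots,k_{m-1})$; $\overline{k}(x)=k(x^{-1})\bmod(x^m-1)$. The QC code generated by $(u_{i1},u_{i2})$, $i=1,2$, is $\{([r_1u_{11}+r_2u_{21}],[r_1u_{12}+r_2u_{22}]):r_i\in\mathcal{R}\}\subseteq\mathbb{F}_q^{2m}$; $\mathcal{C}^{\perp_E}$ is the dual w.r.t. $\sum u_iv_i$. *)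

From HB Require Import structures.
From mathcomp Require Import all_boot all_order all_algebra all_field.
Set Implicit Arguments. Unset Strict Implicit. Unset Printing Implicit Defensive.
Import GRing.Theory.
Local Open Scope ring_scope.

Section QC.
Variable F : fieldType.

(* q-cyclotomic coset of s modulo l, as a subset of {0,...,l-1}:
   { s q^j mod l | j }  (j < l suffices since the orbit has at most l elements) *)
Definition cyc_coset (q l s : nat) : {set 'I_l} :=
  [set i : 'I_l | [exists j : 'I_l, (i : nat) == ((s * q ^ j) %% l)%N]].

Definition Tl (q l : nat) : seq nat :=
  [seq s <- iota 0 l | [forall i in cyc_coset q l s, (s <= i)%N]].

(* representative in T_l of the coset containing -s mod l *)
Definition negrep (q l s : nat) : nat :=
  \big[minn/l]_(i in cyc_coset q l ((l - s %% l) %% l)) (i : nat).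

Definition coefv (m : nat) (k : {poly F}) : 'rV[F]_m :=
  \row_(i < m) (k %% ('X^m - 1))`_i.

(* overline k = k(x^{-1}) mod (x^m - 1); in R, x^{-1} = x^(m-1) *)
Definition pbar (m : nat) (k : {poly F}) : {poly F} :=
  (k \Po 'X^(m.-1)) %% ('X^m - 1).

Definition QC_code (m : nat) (u11 u12 u21 u22 : {poly F})
  (c : 'rV[F]_m * 'rV[F]_m) : Prop :=
  exists r1 r2 : {poly F},
    c = (coefv m (r1 * u11 + r2 * u21), coefv m (r1 * u12 + r2 * u22)).

Definition edot (m : nat) (c d : 'rV[F]_m * 'rV[F]_m) : F :=
  \sum_(i < m) c.1 0 i * d.1 0 i + \sum_(i < m) c.2 0 i * d.2 0 i.

Definition edual (m : nat) (C : 'rV[F]_m * 'rV[F]_m -> Prop)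
  (c : 'rV[F]_m * 'rV[F]_m) : Prop :=
  forall d, C d -> edot c d = 0.

End QC.
Arguments coefv {F} m k.
Arguments pbar {F} m k.
Arguments QC_code {F} m u11 u12 u21 u22 c.
Arguments edot {F} m c d.
Arguments edual {F} m C c.

From HB Require Import structures.
From mathcomp Require Import all_boot all_order all_algebra all_field.
From mathcomp Require Import cyclic zify ring.
Import GRing.Theory.
Local Open Scope ring_scope.
Set Implicit Arguments. Unset Strict Implicit. Unset Printing Implicit Defensive.

(* Work in R = F[x]/(x^m - 1) with polynomials up to the congruence [eqm]. The
   Euclidean product of [a] and [b] is the constant term of a * conj(b), and this form
   is nondegenerate, so (a, b) lies in the dual of C iff (a + b conj(v1)) conj(P1) = 0
   and (a conj(v2) + b) conj(P2) = 0 in R. Conjugation maps M_s to a unit times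
   M_{-s}, because the roots of conj(M_s) are the inverses of those of M_s; as
   x^m - 1 = prod M_s^(p^t), the annihilator of conj(prod M_s^(e_s)) is therefore the
   ideal generated by prod M_s^(p^t - e_{-s}). Inverting 1 - conj(v1) conj(v2) solves
   the two conditions and yields the generators of the dual, and the bounds on r1, r2
   give P1 | P2 | Q1, Q2, which puts these generators in C. *)

Section CongruenceModXm1.
Variables (K : fieldType) (m : nat).
Hypothesis m_gt0 : (0 < m)%N.
Implicit Types f g h u : {poly K}.

Definition xm1 : {poly K} := 'X^m - 1.
Definition eqm f g := xm1 %| f - g.
Definition unitm u := exists v, eqm (u * v) 1.

Lemma size_xm1 : size xm1 = m.+1. Proof. by rewrite /xm1 -polyC1 size_XnsubC. Qed.
Lemma xm1_neq0 : xm1 != 0. Proof. by rewrite -size_poly_eq0 size_xm1. Qed.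

Lemma eqm_refl f : eqm f f. Proof. by rewrite /eqm subrr dvdp0. Qed.
Lemma eqm_sym f g : eqm f g -> eqm g f.
Proof. by rewrite /eqm -opprB dvdpNr. Qed.
Lemma eqm_trans g f h : eqm f g -> eqm g h -> eqm f h.
Proof. by move=> fg gh; have := dvdp_add fg gh; rewrite addrA subrK. Qed.
Lemma eqm0 f : eqm f 0 = (xm1 %| f). Proof. by rewrite /eqm subr0. Qed.

Lemma eqmD f1 f2 g1 g2 : eqm f1 g1 -> eqm f2 g2 -> eqm (f1 + f2) (g1 + g2).
Proof. by rewrite /eqm => e1 e2; have := dvdp_add e1 e2; rewrite opprD addrACA. Qed.
Lemma eqmN f g : eqm f g -> eqm (- f) (- g).
Proof. by rewrite /eqm -opprD dvdpNr. Qed.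
Lemma eqmMl h f g : eqm f g -> eqm (h * f) (h * g).
Proof. by rewrite /eqm -mulrBr; apply: dvdp_mull. Qed.
Lemma eqmMr h f g : eqm f g -> eqm (f * h) (g * h).
Proof. by rewrite ![_ * h]mulrC; apply: eqmMl. Qed.
Lemma eqmM f1 f2 g1 g2 : eqm f1 g1 -> eqm f2 g2 -> eqm (f1 * f2) (g1 * g2).
Proof. by move=> e1 e2; apply: eqm_trans (eqmMl f1 e2) (eqmMr g2 e1). Qed.
Lemma eqmX f g n : eqm f g -> eqm (f ^+ n) (g ^+ n).
Proof. by move=> e; elim: n => [|n IH]; rewrite ?eqm_refl // !exprS eqmM. Qed.
Lemma eqm_prod (I : Type) (r : seq I) (P : pred I) (F G : I -> {poly K}) :
  (forall i, P i -> eqm (F i) (G i)) ->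
  eqm (\prod_(i <- r | P i) F i) (\prod_(i <- r | P i) G i).
Proof.
move=> FG; elim/big_rec2: _ => [|i y1 y2 Pi e]; first exact: eqm_refl.
exact: eqmM (FG i Pi) e.
Qed.

Lemma eqm_modp f : eqm (f %% xm1) f.
Proof.
rewrite /eqm; have -> : f %% xm1 - f = - (f %/ xm1 * xm1).
  by rewrite {2}(divp_eq f xm1); ring.
by rewrite dvdpNr dvdp_mull.
Qed.
Lemma eqm_modpE f g : eqm f g -> f %% xm1 = g %% xm1.
Proof. by move/modp_eq0P; rewrite modpD modpN => /eqP; rewrite subr_eq0 => /eqP. Qed.

Lemma eqm_Xn_modn k : eqm 'X^k 'X^(k %% m).
Proof.
rewrite {1}(divn_eq k m) mulnC exprD exprM -{2}['X^(k %% m)]mul1r.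
by apply: eqmMr; rewrite -(expr1n _ (k %/ m)); apply: eqmX; rewrite /eqm.
Qed.

Lemma eqm_Xn_mulpred k : eqm ('X^(m.-1 * k) * 'X^k) 1.
Proof.
rewrite -exprD -mulSnr prednK //; have := eqm_Xn_modn (m * k).
by rewrite modnMr.
Qed.

Lemma unitmM u v : unitm u -> unitm v -> unitm (u * v).
Proof.
move=> [u' uu'] [v' vv']; exists (u' * v').
by rewrite mulrACA -(mulr1 1); apply: eqmM.
Qed.
Lemma unitmX u n : unitm u -> unitm (u ^+ n).
Proof.
move=> [u' uu']; exists (u' ^+ n).
by rewrite -exprMn -(expr1n _ n); apply: eqmX.
Qed.
Lemma unitm_prod (I : Type) (r : seq I) (P : pred I) (F : I -> {poly K}) :
  (forall i, P i -> unitm (F i)) -> unitm (\prod_(i <- r | P i) F i).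
Proof.
move=> Fu; elim/big_rec: _ => [|i y Pi yu]; last exact: unitmM (Fu i Pi) yu.
by exists 1; rewrite mulr1 eqm_refl.
Qed.
Lemma unitmN u : unitm u -> unitm (- u).
Proof. by move=> [v uv]; exists (- v); rewrite mulrNN. Qed.
Lemma unitmC (c : K) : c != 0 -> unitm c%:P.
Proof. by move=> c0; exists c^-1%:P; rewrite -polyCM mulfV // eqm_refl. Qed.
Lemma unitmXn k : unitm 'X^k.
Proof. by exists 'X^(m.-1 * k); rewrite mulrC eqm_Xn_mulpred. Qed.
Lemma unitm_eqm u v : eqm u v -> unitm u -> unitm v.
Proof.
move=> uv [w uw]; exists w; apply: eqm_trans _ uw.
exact/eqmMr/eqm_sym.
Qed.
Lemma coprimep_unitm u : coprimep u xm1 -> unitm u.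
Proof.
case/Bezout_eq1_coprimepP => [[a b] /= Bez]; exists a.
rewrite /eqm; have -> : u * a - 1 = - (b * xm1) by rewrite -Bez; ring.
by rewrite dvdpNr dvdp_mull.
Qed.
Lemma unitm_mul_eqm0 u f : unitm u -> eqm (u * f) 0 -> eqm f 0.
Proof.
move=> [v uv] uf0; apply: (eqm_trans (g := v * (u * f))).
  by rewrite mulrA [v * u]mulrC -{1}[f]mul1r; apply/eqmMr/eqm_sym.
by rewrite -(mulr0 v); apply: eqmMl.
Qed.

Lemma eqm_mul0P (A N Q u : {poly K}) :
  Q * N = xm1 -> unitm u -> eqm A (u * N) ->
  forall h, eqm (h * A) 0 <-> Q %| h.
Proof.
move=> QN u_unit AuN h.
have hA : eqm (h * A) (u * (h * N)) by rewrite mulrCA; apply: eqmMl.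
split=> [hA0|/dvdpP [k hk]].
  have N_neq0 : N != 0 by apply: contraNneq xm1_neq0; rewrite -QN => ->; rewrite mulr0.
  rewrite -(dvdp_mul2r _ _ N_neq0) QN -eqm0.
  exact: unitm_mul_eqm0 u_unit (eqm_trans (eqm_sym hA) hA0).
apply: eqm_trans hA _; rewrite hk -mulrA QN eqm0.
by apply/dvdp_mull/dvdp_mull.
Qed.

Definition coef0m f := (f %% xm1)`_0.

Lemma eqm_coef0m f g : eqm f g -> coef0m f = coef0m g.
Proof. by rewrite /coef0m => /eqm_modpE ->. Qed.
Lemma coef0mD f g : coef0m (f + g) = coef0m f + coef0m g.
Proof. by rewrite /coef0m modpD coefD. Qed.
Lemma coef0mZ c f : coef0m (c *: f) = c * coef0m f.
Proof. by rewrite /coef0m modpZl coefZ. Qed.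
Lemma coef0m0 : coef0m 0 = 0. Proof. by rewrite /coef0m mod0p coef0. Qed.
Lemma coef0m_sum (I : Type) (r : seq I) (F : I -> {poly K}) :
  coef0m (\sum_(i <- r) F i) = \sum_(i <- r) coef0m (F i).
Proof. exact: (big_morph coef0m coef0mD coef0m0). Qed.
Lemma coef0m_Xn k : coef0m 'X^k = ((k %% m)%N == 0%N)%:R.
Proof.
rewrite /coef0m (eqm_modpE (eqm_Xn_modn k)) modp_small ?coefXn 1?eq_sym //.
by rewrite size_xm1 size_polyXn ltnS ltn_mod.
Qed.

Lemma pbar0 : pbar m (0 : {poly K}) = 0.
Proof. by rewrite /pbar comp_poly0 mod0p. Qed.
Lemma pbarD f g : pbar m (f + g) = pbar m f + pbar m g.
Proof. by rewrite /pbar comp_polyD modpD. Qed.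
Lemma pbarN f : pbar m (- f) = - pbar m f.
Proof. by rewrite /pbar -sub0r comp_polyB comp_poly0 sub0r modpN. Qed.
Lemma pbarC (c : K) : pbar m c%:P = c%:P.
Proof.
by rewrite /pbar comp_polyC modp_small // size_xm1 ltnS (leq_trans (size_polyC_leq1 c)).
Qed.
Lemma pbar1 : pbar m (1 : {poly K}) = 1.
Proof. by rewrite -polyC1 pbarC. Qed.

Lemma eqm_pbar f : eqm (pbar m f) (f \Po 'X^(m.-1)).
Proof. exact: eqm_modp. Qed.

Lemma pbar_eqm f g : eqm f g -> eqm (pbar m f) (pbar m g).
Proof.
move=> fg; apply: eqm_trans (eqm_pbar f) _; apply: eqm_sym.
apply: eqm_trans (eqm_pbar g) _; apply: eqm_sym; rewrite /eqm -comp_polyB.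
apply: dvdp_trans (dvdp_comp_poly _ fg).
rewrite /xm1 comp_polyB comp_Xn_poly comp_polyC -exprM.
by have := eqm_Xn_modn (m.-1 * m); rewrite modnMl.
Qed.

Lemma pbarM f g : eqm (pbar m (f * g)) (pbar m f * pbar m g).
Proof.
apply: eqm_trans (eqm_pbar _) _; rewrite comp_polyM.
by apply: eqmM; apply: eqm_sym; apply: eqm_pbar.
Qed.
Lemma pbarX f n : eqm (pbar m (f ^+ n)) (pbar m f ^+ n).
Proof.
elim: n => [|n IH]; first by rewrite !expr0 pbar1 eqm_refl.
by rewrite !exprS; apply: eqm_trans (pbarM _ _) _; apply: eqmMl.
Qed.
Lemma pbar_prod (I : Type) (r : seq I) (P : pred I) (F : I -> {poly K}) :
  eqm (pbar m (\prod_(i <- r | P i) F i)) (\prod_(i <- r | P i) pbar m (F i)).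
Proof.
elim/big_rec2: _ => [|i y1 y2 Pi e]; first by rewrite pbar1 eqm_refl.
by apply: eqm_trans (pbarM _ _) _; apply: eqmMl.
Qed.
Lemma pbarXn k : eqm (pbar m ('X^k : {poly K})) 'X^(m.-1 * k).
Proof. by apply: eqm_trans (eqm_pbar _) _; rewrite comp_Xn_poly -exprM eqm_refl. Qed.

Lemma unitm_pbar u : unitm u -> unitm (pbar m u).
Proof.
move=> [v uv]; exists (pbar m v); apply: eqm_trans (eqm_sym (pbarM _ _)) _.
by rewrite -pbar1; apply: pbar_eqm.
Qed.

End CongruenceModXm1.

Lemma add_mulpred_mod_eq0 m i j : (i < m)%N -> (j < m)%N ->
  ((i + m.-1 * j) %% m == 0)%N = (i == j).
Proof.
case: m => // n im jm /=; have [<-|ij] := eqVneq i j.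
  by rewrite -mulSn modnMr eqxx.
apply/negbTE/eqP => ij0; move/eqP: ij; apply.
have : ((i + n * j + j) %% n.+1 = j)%N by rewrite -modnDml ij0 add0n modn_small.
by rewrite -addnA -mulSnr addnC mulnC modnMDl modn_small.
Qed.

Section TraceForm.
Variables (K : fieldType) (m : nat).
Hypothesis m_gt0 : (0 < m)%N.
Implicit Types f g h : {poly K}.

Lemma size_modp_xm1 f : (size (f %% xm1 K m)%R <= m)%N.
Proof. by rewrite -ltnS -(size_xm1 K m_gt0) ltn_modp xm1_neq0. Qed.

Lemma coefv_eqm f g : eqm m f g -> coefv m f = coefv m g.
Proof. by move=> /eqm_modpE fg; apply/rowP => i; rewrite !mxE fg. Qed.

Lemma coefv_sum (r : 'rV[K]_m) : coefv m (\sum_(i < m) r 0 i *: 'X^i) = r.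
Proof.
set p := \sum_(i < m) _.
have coef_p k : p`_k = \sum_(i < m) r 0 i * (k == i)%:R.
  by rewrite coef_sum; apply: eq_bigr => i _; rewrite coefZ coefXn.
have size_p : (size p <= m)%N.
  apply/leq_sizeP => k mk; rewrite coef_p big1 // => i _.
  by rewrite gtn_eqF ?mulr0 // (leq_trans (ltn_ord i)).
apply/rowP => k; rewrite mxE modp_small ?(size_xm1 K m_gt0) // coef_p.
rewrite (bigD1 k) //= eqxx mulr1 big1 ?addr0 // => j /negbTE jk.
by rewrite val_eqE eq_sym jk mulr0.
Qed.

Lemma dot_coefv f g :
  \sum_(i < m) coefv m f 0 i * coefv m g 0 i = coef0m m (f * pbar m g).
Proof.
have expand h : h %% xm1 K m = \sum_(i < m) (h %% xm1 K m)`_i *: 'X^i.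
  rewrite -poly_def; apply/polyP => i; rewrite coef_poly; case: ltnP => // mi.
  by rewrite nth_default // (leq_trans (size_modp_xm1 h)).
have -> : coef0m m (f * pbar m g) =
          coef0m m ((f %% xm1 K m) * ((g %% xm1 K m) \Po 'X^(m.-1))).
  apply/eqm_coef0m/eqmM; first exact/eqm_sym/eqm_modp.
  exact: eqm_trans (pbar_eqm (eqm_sym (eqm_modp _ g))) (eqm_pbar _ _).
rewrite (expand f) (expand g) linear_sum big_distrl coef0m_sum.
apply: eq_bigr => i _; rewrite big_distrr coef0m_sum (bigD1 i) //= big1 ?addr0.
  rewrite comp_polyZ comp_Xn_poly -exprM -scalerAl -scalerAr !coef0mZ -exprD.
  by rewrite coef0m_Xn // add_mulpred_mod_eq0 // eqxx mulr1 !mxE.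
move=> j /negbTE ji; rewrite comp_polyZ comp_Xn_poly -exprM -scalerAl -scalerAr.
by rewrite !coef0mZ -exprD coef0m_Xn // add_mulpred_mod_eq0 // val_eqE eq_sym ji !mulr0.
Qed.

Lemma dot0_eqm0 f : (forall g, coef0m m (f * pbar m g) = 0) -> eqm m f 0.
Proof.
move=> f0; rewrite eqm0; apply/modp_eq0P/polyP => k; rewrite coef0.
have [km|mk] := ltnP k m; last by rewrite nth_default // (leq_trans (size_modp_xm1 f)).
have Xk j : ('X^k %% xm1 K m)`_j = (j == k)%:R.
  by rewrite modp_small ?coefXn // (size_xm1 K m_gt0) size_polyXn ltnS.
rewrite -[RHS](f0 'X^k) -dot_coefv (bigD1 (Ordinal km)) //= big1 ?addr0.
  by rewrite !mxE Xk eqxx mulr1.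
by move=> j /negbTE jk; rewrite !mxE Xk (_ : (j == k :> nat) = false) ?mulr0.
Qed.

Lemma edot_QC_code (P1 P2 v1 v2 a b r1 r2 : {poly K}) :
  edot m (coefv m a, coefv m b)
    (coefv m (r1 * P1 + r2 * (v2 * P2)), coefv m (r1 * (v1 * P1) + r2 * P2)) =
  coef0m m ((a + b * pbar m v1) * pbar m P1 * pbar m r1 +
            (a * pbar m v2 + b) * pbar m P2 * pbar m r2).
Proof.
rewrite /edot /= !dot_coefv -coef0mD; apply: eqm_coef0m.
have pbar_lin (x y z w u : {poly K}) : eqm m (pbar m (x * y + z * (w * u)))
    (pbar m x * pbar m y + pbar m z * (pbar m w * pbar m u)).
  rewrite pbarD; apply: eqmD; first exact: pbarM.
  by apply: eqm_trans (pbarM _ _ _) _; apply: eqmMl; apply: pbarM.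
have e2 := pbar_lin r2 P2 r1 v1 P1; rewrite addrC [X in eqm _ _ X]addrC in e2.
apply: eqm_trans (eqmD (eqmMl a (pbar_lin r1 P1 r2 v2 P2)) (eqmMl b e2)) _.
by rewrite /eqm (_ : _ - _ = 0) ?dvdp0 //; ring.
Qed.

Lemma edual_QC_codeP (P1 P2 v1 v2 a b : {poly K}) :
  edual m (QC_code m P1 (v1 * P1) (v2 * P2) P2) (coefv m a, coefv m b) <->
  eqm m ((a + b * pbar m v1) * pbar m P1) 0 /\
  eqm m ((a * pbar m v2 + b) * pbar m P2) 0.
Proof.
split=> [orth|[A1 A2] _ [r1 [r2 ->]]].
  split; apply: dot0_eqm0 => r.
    have := orth _ (ex_intro _ r (ex_intro _ 0 erefl)).
    by rewrite edot_QC_code pbar0 mulr0 addr0.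
  have := orth _ (ex_intro _ 0 (ex_intro _ r erefl)).
  by rewrite edot_QC_code pbar0 mulr0 add0r.
rewrite edot_QC_code -(coef0m0 K m); apply: eqm_coef0m.
have := eqmD (eqmMr (pbar m r1) A1) (eqmMr (pbar m r2) A2).
by rewrite !mul0r addr0.
Qed.

End TraceForm.

Section DualCode.
Variables (K : fieldType) (m : nat).
Hypothesis m_gt0 : (0 < m)%N.

Lemma QC_code_mul (P1 P2 v1 v2 x y : {poly K}) :
  P1 %| P2 -> unitm m (1 - v1 * v2) ->
  QC_code m P1 (v1 * P1) (v2 * P2) P2 (coefv m (P2 * x), coefv m (P2 * y)).
Proof.
move=> /dvdpP [f ->] [w vw]; set g := w * (x - v2 * y).
exists (f * g), (y - v1 * g); congr pair; apply: coefv_eqm; last first.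
  by rewrite (_ : _ + _ = f * P1 * y) ?eqm_refl //; ring.
have -> : f * g * P1 + (y - v1 * g) * (v2 * (f * P1)) =
          f * P1 * ((x - v2 * y) * ((1 - v1 * v2) * w)) + f * P1 * (v2 * y).
  by rewrite /g; ring.
rewrite -{1}(subrK (v2 * y) x) [X in eqm _ X _]mulrDr.
apply: eqmD; last exact: eqm_refl.
apply: eqmMl.
by rewrite -{1}[x - v2 * y]mulr1; apply/eqmMl/eqm_sym.
Qed.

Lemma QC_code_sub (P1 P2 Q1 Q2 v1 v2 w1 w2 : {poly K}) :
  P1 %| P2 -> P2 %| Q1 -> P2 %| Q2 -> unitm m (1 - v1 * v2) ->
  forall c, QC_code m Q1 (w1 * Q1) (w2 * Q2) Q2 c ->
            QC_code m P1 (v1 * P1) (v2 * P2) P2 c.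
Proof.
move=> P12 /dvdpP [g1 ->] /dvdpP [g2 ->] v_unit _ [s1 [s2 ->]].
rewrite (_ : _ + _ = P2 * (s1 * g1 + s2 * (w2 * g2))); last ring.
rewrite [X in (_, coefv m X)](_ : _ = P2 * (s1 * (w1 * g1) + s2 * g2)); last ring.
exact: QC_code_mul.
Qed.

Variables (P1 P2 Q1 Q2 v1 v2 : {poly K}).
Hypothesis annihilator1 : forall h, eqm m (h * pbar m P1) 0 <-> Q1 %| h.
Hypothesis annihilator2 : forall h, eqm m (h * pbar m P2) 0 <-> Q2 %| h.
Hypothesis unit_v : unitm m (1 - v1 * v2).

Lemma edual_QC_code c :
  edual m (QC_code m P1 (v1 * P1) (v2 * P2) P2) c <->
  QC_code m Q1 (- pbar m v2 * Q1) (- pbar m v1 * Q2) Q2 c.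
Proof.
set V1 := pbar m v1; set V2 := pbar m v2.
split=> [|[s1 [s2 ->]]]; last first.
  apply/edual_QC_codeP => //; split.
    rewrite (_ : _ * _ = s1 * (1 - V1 * V2) * (Q1 * pbar m P1)); last ring.
    by rewrite -(mulr0 (s1 * (1 - V1 * V2))); apply/eqmMl/annihilator1.
  rewrite (_ : _ * _ = s2 * (1 - V1 * V2) * (Q2 * pbar m P2)); last ring.
  by rewrite -(mulr0 (s2 * (1 - V1 * V2))); apply/eqmMl/annihilator2.
have [w vw] : unitm m (1 - V1 * V2).
  apply: unitm_eqm _ (unitm_pbar m_gt0 unit_v); rewrite pbarD pbarN pbar1 //.
  exact: eqmD (eqm_refl _ _) (eqmN (pbarM _ _ _)).
case: c => c1 c2; rewrite -(coefv_sum m_gt0 c1) -(coefv_sum m_gt0 c2).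
move: (\sum_(i < m) c1 0 i *: 'X^i) (\sum_(i < m) c2 0 i *: 'X^i) => a b.
move/(edual_QC_codeP m_gt0) => -[/annihilator1/dvdpP[k1 Ek1] /annihilator2/dvdpP[k2 Ek2]].
have unit_mul x : eqm m (x * ((1 - V1 * V2) * w)) x.
  by rewrite -{2}[x]mulr1; apply: eqmMl.
exists (w * k1), (w * k2); congr pair; apply: coefv_eqm; apply: eqm_sym.
  have -> : w * k1 * Q1 + w * k2 * (- V1 * Q2) = w * (k1 * Q1) - w * V1 * (k2 * Q2).
    by ring.
  by rewrite -Ek1 -Ek2 (_ : _ - _ = a * ((1 - V1 * V2) * w)) ?unit_mul //; ring.
have -> : w * k1 * (- V2 * Q1) + w * k2 * Q2 = w * (k2 * Q2) - w * V2 * (k1 * Q1).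
  by ring.
by rewrite -Ek1 -Ek2 (_ : _ - _ = b * ((1 - V1 * V2) * w)) ?unit_mul //; ring.
Qed.

End DualCode.

Lemma leq_totient n : (totient n <= n)%N.
Proof.
rewrite totient_count_coprime (@leq_trans (\sum_(0 <= d < n) 1)%N) //.
  by apply: leq_sum => i _; apply: leq_b1.
by rewrite sum_nat_const_nat muln1 subn0.
Qed.

Section CyclotomicCosets.
Variables q l : nat.
Hypotheses (l_gt0 : (0 < l)%N) (q_coprime : coprime q l).

Local Notation C := (cyc_coset q l).
Local Notation T := (Tl q l).
Local Notation ord_mod x := (Ordinal (ltn_pmod x l_gt0)).

Lemma ord_modE (i : 'I_l) : ord_mod i = i.
Proof. by apply/val_inj; rewrite /= modn_small. Qed.

(* The exponents in [cyc_coset] range over 'I_l only; by Euler's theorem this loses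
   nothing. *)
Lemma cyc_cosetP x (i : 'I_l) :
  reflect (exists j, i = x * q ^ j %% l :> nat)%N (i \in C x).
Proof.
rewrite inE; apply: (iffP existsP) => [[j /eqP ->]|[j ->]]; first by exists j.
set e := totient l; have e_gt0 : (0 < e)%N by rewrite totient_gt0.
have jl : (j %% e < l)%N by apply: leq_trans (ltn_pmod _ e_gt0) (leq_totient l).
exists (Ordinal jl); apply/eqP => /=.
have qe : (q ^ (j %/ e * e) %% l = 1 %% l)%N.
  by rewrite mulnC expnM -modnXm Euler_exp_totient // modnXm exp1n.
rewrite {1}(divn_eq j e) expnD mulnA mulnAC.
by rewrite -modnMmr qe modnMmr muln1.
Qed.

Lemma cyc_coset_mod x : C (x %% l) = C x.
Proof.
by apply/setP => i; apply/cyc_cosetP/cyc_cosetP => -[j ->]; exists j; rewrite modnMml.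
Qed.

Lemma cyc_coset_self x : ord_mod x \in C x.
Proof. by apply/cyc_cosetP; exists 0%N; rewrite expn0 muln1. Qed.

Lemma cyc_coset_trans x (i k : 'I_l) : i \in C x -> k \in C i -> k \in C x.
Proof.
move=> /cyc_cosetP [j ei] /cyc_cosetP [j' ek]; apply/cyc_cosetP; exists (j + j')%N.
by rewrite ek ei modnMml expnD mulnA.
Qed.

Lemma cyc_coset_sym x (i : 'I_l) : i \in C x -> ord_mod x \in C i.
Proof.
move=> /cyc_cosetP [j ei]; apply/cyc_cosetP => /=; exists (totient l * j - j)%N.
have le_j : (j <= totient l * j)%N by rewrite leq_pmull // totient_gt0.
rewrite ei modnMml -mulnA -expnD subnKC // expnM mulnC -modnMm -modnXm.
by rewrite Euler_exp_totient // modnXm exp1n modnMm mul1n.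
Qed.

Lemma cyc_coset_eq x y : ord_mod y \in C x -> C y = C x.
Proof.
move=> yx; apply/setP => k; apply/idP/idP => kC.
  by apply: cyc_coset_trans yx _; rewrite cyc_coset_mod.
rewrite -cyc_coset_mod; apply: cyc_coset_trans (cyc_coset_sym yx) _.
by rewrite cyc_coset_mod.
Qed.

Definition coset_min x := \big[minn/l]_(i in C x) (i : nat).

Lemma coset_min_le x (i : 'I_l) : i \in C x -> (coset_min x <= i)%N.
Proof.
rewrite /coset_min -big_filter => xi.
have : i \in [seq j <- index_enum 'I_l | j \in C x] by rewrite mem_filter xi mem_index_enum.
elim: [seq _ <- _ | _] => //= a s IH; rewrite inE big_cons => /orP [/eqP ->|/IH].
  exact: geq_minl.
exact: leq_trans (geq_minr _ _).
Qed.

Lemma coset_min_in x : ord_mod (coset_min x) \in C x.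
Proof.
suff [i xi ->] : exists2 i : 'I_l, i \in C x & coset_min x = i by rewrite ord_modE.
have : coset_min x = l \/ exists2 i : 'I_l, i \in C x & coset_min x = i.
  rewrite /coset_min; elim/big_rec: _ => [|i y xi [->|[k xk ->]]]; first by left.
    by right; exists i; rewrite // /minn ltn_ord.
  by right; rewrite /minn; case: ifP => _; [exists i|exists k].
case=> // min_l; have := coset_min_le (cyc_coset_self x).
by rewrite min_l leqNgt ltn_pmod.
Qed.

Lemma coset_min_lt x : (coset_min x < l)%N.
Proof. exact: leq_ltn_trans (coset_min_le (coset_min_in x)) (ltn_pmod _ l_gt0). Qed.

Lemma mem_TlP s :
  reflect ((s < l)%N /\ forall i : 'I_l, i \in C s -> (s <= i)%N) (s \in T).
Proof.
rewrite mem_filter mem_iota add0n andbC.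
by apply: (iffP andP) => -[sl /forall_inP min_s]; split.
Qed.

Lemma coset_min_Tl x : coset_min x \in T.
Proof.
apply/mem_TlP; split=> [|i]; first exact: coset_min_lt.
move=> ci; apply/coset_min_le/(cyc_coset_trans (coset_min_in x)).
by rewrite /= cyc_coset_mod.
Qed.

Lemma coset_min_id s : s \in T -> coset_min s = s.
Proof.
case/mem_TlP => sl min_s; apply/eqP; rewrite eqn_leq; apply/andP; split.
  by have := coset_min_le (cyc_coset_self s); rewrite /= modn_small.
by have := min_s _ (coset_min_in s); rewrite /= modn_small ?coset_min_lt.
Qed.

Lemma mem_cyc_coset_Tl s (i : 'I_l) : s \in T -> (i \in C s) = (s == coset_min i).
Proof.
move=> sT; apply/idP/eqP => [si|->].
  have Ci : C i = C s by apply: cyc_coset_eq; rewrite ord_modE.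
  by rewrite -(coset_min_id sT) /coset_min Ci.
by have := cyc_coset_sym (coset_min_in i); rewrite ord_modE /= cyc_coset_mod.
Qed.

Definition ord_opp (i : 'I_l) : 'I_l := ord_mod (l - i).

Lemma ord_oppK : involutive ord_opp.
Proof.
move=> i; apply/val_inj => /=; have [->|i_gt0] := posnP i.
  by rewrite subn0 modnn subn0 modnn.
have il := ltn_ord i; have lil : (l - i < l)%N by rewrite ltn_subrL i_gt0.
by rewrite (modn_small lil) subKn ?modn_small // ltnW.
Qed.

Lemma cyc_coset_opp a b (i : 'I_l) :
  ((a + b) %% l = 0)%N -> i \in C a -> ord_opp i \in C b.
Proof.
move=> ab0 /cyc_cosetP [j ei]; apply/cyc_cosetP; exists j => /=.
apply/eqP; rewrite -(eqn_modDr i) subnK ?modnn 1?ltnW //.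
by rewrite ei modnDmr -mulnDl addnC -modnMml ab0 mul0n mod0n.
Qed.

Lemma mem_cyc_coset_negrep s (i : 'I_l) :
  (i \in C (negrep q l s)) = (ord_opp i \in C s).
Proof.
set t := ((l - s %% l) %% l)%N.
have st : ((s + t) %% l = 0)%N.
  by rewrite modnDmr -modnDml subnKC ?modnn // ltnW ?ltn_pmod.
have -> : negrep q l s = coset_min t by [].
rewrite (cyc_coset_eq (coset_min_in t)); apply/idP/idP => [|si].
  by apply: cyc_coset_opp; rewrite addnC.
by rewrite -[i]ord_oppK; apply: cyc_coset_opp si.
Qed.

Lemma negrep_Tl s : negrep q l s \in T.
Proof. exact: coset_min_Tl. Qed.

Lemma negrepK s : s \in T -> negrep q l (negrep q l s) = s.
Proof.
move=> sT; have Cn : C (negrep q l (negrep q l s)) = C s.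
  by apply/setP => i; rewrite !mem_cyc_coset_negrep ord_oppK.
by rewrite -[RHS](coset_min_id sT) -(coset_min_id (negrep_Tl _)) /coset_min Cn.
Qed.

Lemma Tl_uniq : uniq T.
Proof. exact/filter_uniq/iota_uniq. Qed.

Lemma perm_negrep : perm_eq (map (negrep q l) T) T.
Proof.
apply: uniq_perm Tl_uniq _ => [|s].
  rewrite map_inj_in_uniq ?Tl_uniq // => s t sT tT st.
  by rewrite -(negrepK sT) st negrepK.
apply/mapP/idP => [[t _ ->]|sT]; first exact: negrep_Tl.
by exists (negrep q l s); rewrite ?negrep_Tl ?negrepK.
Qed.

Lemma big_negrep (R : Type) (idx : R) (op : Monoid.com_law idx) (F : nat -> R) :
  \big[op/idx]_(s <- T) F (negrep q l s) = \big[op/idx]_(s <- T) F s.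
Proof. by rewrite -[RHS](perm_big _ perm_negrep) big_map. Qed.

Lemma big_cyc_cosets (R : Type) (idx : R) (op : Monoid.com_law idx) (F : 'I_l -> R) :
  \big[op/idx]_(i < l) F i = \big[op/idx]_(s <- T) \big[op/idx]_(i in C s) F i.
Proof.
rewrite [RHS]big_seq_cond.
rewrite (eq_bigr (fun s => \big[op/idx]_(i < l) if s == coset_min i then F i else idx)).
  rewrite -big_seq_cond exchange_big /=; apply: eq_bigr => i _.
  rewrite (bigD1_seq (coset_min i)) ?coset_min_Tl ?Tl_uniq //= eqxx big1 ?Monoid.mulm1 //.
  by move=> s /negbTE ->.
move=> s /andP [sT _]; rewrite big_mkcond /=; apply: eq_bigr => i _.
by rewrite mem_cyc_coset_Tl.
Qed.

Lemma big_cyc_coset_negrep (R : Type) (idx : R) (op : Monoid.com_law idx)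
    (F : 'I_l -> R) s :
  \big[op/idx]_(i in C s) F (ord_opp i) = \big[op/idx]_(i in C (negrep q l s)) F i.
Proof.
rewrite [RHS](reindex_inj (can_inj ord_oppK)) /=; apply: eq_bigl => i.
by rewrite mem_cyc_coset_negrep ord_oppK.
Qed.

End CyclotomicCosets.

Lemma dvdp_prod_exp (K : fieldType) (M : nat -> {poly K}) (r : seq nat) (a b : nat -> nat) :
  (forall s, s \in r -> (a s <= b s)%N) ->
  \prod_(s <- r) M s ^+ a s %| \prod_(s <- r) M s ^+ b s.
Proof.
move=> ab; rewrite big_seq [X in _ %| X]big_seq.
elim/big_rec2: _ => [|s x y sr xy]; first exact: dvdpp.
by apply: dvdp_mul xy; rewrite -(subnK (ab s sr)) exprD dvdp_mulIr.
Qed.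

Lemma Xn_sub1_pchar (K : fieldType) p t l : p \in [pchar K] ->
  ('X^(l * p ^ t) - 1 : {poly K}) = ('X^l - 1) ^+ (p ^ t).
Proof.
move=> pK; have pKX : p \in [pchar {poly K}] by rewrite pchar_poly.
elim: t => [|t IH]; first by rewrite expn0 muln1 expr1.
rewrite expnSr mulnA (exprM ('X^l - 1)) -IH -(pFrobenius_autE pKX).
rewrite pFrobenius_autB_comm; last exact: commr1.
by rewrite pFrobenius_aut1 pFrobenius_autE -exprM.
Qed.

Lemma map_xm1 (K L : fieldType) (phi : {rmorphism K -> L}) m :
  map_poly phi (xm1 K m) = xm1 L m.
Proof. by rewrite /xm1 rmorphB /= map_polyXn rmorph1. Qed.

Lemma map_pbar (K L : fieldType) (phi : {rmorphism K -> L}) m f :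
  map_poly phi (pbar m f) = pbar m (map_poly phi f).
Proof. by rewrite /pbar map_modp map_comp_poly rmorphB /= rmorph1 !map_polyXn. Qed.

Lemma eqm_map (K L : fieldType) (phi : {rmorphism K -> L}) m f g :
  eqm m (map_poly phi f) (map_poly phi g) = eqm m f g.
Proof. by rewrite /eqm -rmorphB -(map_xm1 phi) dvdp_map. Qed.

Section PbarSplit.
Variables (K : fieldType) (m : nat).
Hypothesis m_gt0 : (0 < m)%N.

(* x * conj(x - a) = x^m - a x, which is 1 - a x in F[x]/(x^m - 1). *)
Lemma pbar_XsubC (a : K) : a != 0 ->
  eqm m ('X * pbar m ('X - a%:P)) ((- a)%:P * ('X - a^-1%:P)).
Proof.
move=> a_neq0; have Xpbar : eqm m ('X * pbar m ('X - a%:P)) ('X^m - 'X * a%:P).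
  rewrite -[in X in eqm _ _ X](prednK m_gt0) exprS -mulrBr; apply: eqmMl.
  rewrite pbarD pbarN pbarC //; apply: eqmD; last exact: eqm_refl.
  by have := pbarXn K m 1; rewrite expr1 muln1.
apply: eqm_trans Xpbar _; rewrite /eqm.
have -> : (- a)%:P * ('X - a^-1%:P) = 1 - 'X * a%:P.
  by rewrite mulrBr -polyCM mulNr mulfV // polyCN; ring.
by rewrite opprB addrA subrK.
Qed.

Lemma pbar_prod_XsubC (I : finType) (S : {pred I}) (a : I -> K) :
  (forall i, a i != 0) ->
  eqm m ('X^#|S| * pbar m (\prod_(i in S) ('X - (a i)%:P)))
        (\prod_(i in S) ((- a i)%:P * ('X - (a i)^-1%:P))).
Proof.
move=> a_neq0; rewrite -prodr_const.
apply: eqm_trans (eqmMl _ (pbar_prod m_gt0 _ _ _)) _; rewrite -big_split /=.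
by apply: eqm_prod => i _; apply: pbar_XsubC.
Qed.

End PbarSplit.

Section CyclotomicFactors.
Variables (F L : fieldType) (phi : {rmorphism F -> L}) (alpha : L).
Variables (M : nat -> {poly F}) (q l p t m : nat).
Hypotheses (l_gt0 : (0 < l)%N) (q_coprime : coprime q l).
Hypotheses (pF : p \in [pchar F]) (mE : m = (l * p ^ t)%N).
Hypothesis prim : l.-primitive_root alpha.
Hypothesis map_M : forall s, s \in Tl q l ->
  map_poly phi (M s) = \prod_(i in cyc_coset q l s) ('X - (alpha ^+ i)%:P).

Local Notation C := (cyc_coset q l).
Local Notation T := (Tl q l).
Local Notation negrep := (negrep q l).

Let m_gt0 : (0 < m)%N.
Proof. by rewrite mE muln_gt0 l_gt0 expn_gt0 prime_gt0 // (pcharf_prime pF). Qed.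

Let alpha_neq0 : alpha != 0.
Proof. by rewrite (prim_root_eq0 prim) gtn_eqF. Qed.

Lemma Xn_sub1_prod : ('X^l - 1 : {poly F}) = \prod_(s <- T) M s.
Proof.
apply: (map_poly_inj phi); rewrite rmorph_prod rmorphB /= map_polyXn rmorph1.
rewrite -(factor_Xn_sub_1 prim) big_mkord (big_cyc_cosets l_gt0 q_coprime).
by rewrite big_seq [RHS]big_seq; apply: eq_bigr => s sT; rewrite map_M.
Qed.

Lemma xm1_prod : xm1 F m = \prod_(s <- T) M s ^+ (p ^ t).
Proof. by rewrite /xm1 mE (Xn_sub1_pchar _ _ pF) Xn_sub1_prod prodrXl. Qed.

Lemma expr_ord_opp (i : 'I_l) : alpha ^+ ord_opp l_gt0 i = (alpha ^+ i)^-1.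
Proof.
have ai : alpha ^+ i != 0 by rewrite expf_neq0.
rewrite /= (prim_expr_mod prim); apply: (mulIf ai).
by rewrite mulVf // -exprD subnK ?(ltnW (ltn_ord i)) // prim_expr_order.
Qed.

Lemma map_coef0_M s : s \in T -> phi (M s)`_0 = \prod_(i in C s) (- alpha ^+ i).
Proof.
move=> sT; rewrite -coef_map map_M // -horner_coef0 horner_prod.
by apply: eq_bigr => i _; rewrite hornerXsubC sub0r.
Qed.

Lemma coef0_M_neq0 s : s \in T -> (M s)`_0 != 0.
Proof.
move=> sT; rewrite -(fmorph_eq0 phi) map_coef0_M //; apply/prodf_neq0 => i _.
by rewrite oppr_eq0 expf_neq0.
Qed.

(* Over L the roots of the conjugate of M s are the inverses alpha^-i = alpha^(-i)
   of the roots of M s, i.e. the roots of M (negrep s). *)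
Lemma Xn_pbar_M s : s \in T ->
  eqm m ('X^#|C s| * pbar m (M s)) (((M s)`_0)%:P * M (negrep s)).
Proof.
move=> sT; rewrite -(eqm_map phi) !rmorphM /= map_polyXn map_pbar map_polyC /=.
have alphaX_neq0 (i : 'I_l) : alpha ^+ i != 0 by apply: expf_neq0.
rewrite !map_M ?(negrep_Tl l_gt0 q_coprime) //.
apply: eqm_trans (pbar_prod_XsubC m_gt0 _ alphaX_neq0) _.
rewrite big_split /= -rmorph_prod map_coef0_M //.
rewrite -(big_cyc_coset_negrep l_gt0 q_coprime _ (fun j => 'X - (alpha ^+ j)%:P)).
by under [X in eqm _ _ (_ * X)]eq_bigr => i _ do rewrite expr_ord_opp; apply: eqm_refl.
Qed.

Definition pbar_unit s := ((M s)`_0)%:P * 'X^(m.-1 * #|C s|).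

Lemma unitm_pbar_unit s : s \in T -> unitm m (pbar_unit s).
Proof. by move=> sT; apply: unitmM; [apply/unitmC/coef0_M_neq0 | apply: unitmXn]. Qed.

Lemma pbar_M s : s \in T -> eqm m (pbar m (M s)) (pbar_unit s * M (negrep s)).
Proof.
move=> sT; apply: (eqm_trans (g := 'X^(m.-1 * #|C s|) * 'X^#|C s| * pbar m (M s))).
  by rewrite -{1}[pbar m (M s)]mul1r; apply/eqmMr/eqm_sym/eqm_Xn_mulpred.
rewrite -mulrA /pbar_unit [_ * 'X^_]mulrC -mulrA; apply: eqmMl.
exact: Xn_pbar_M.
Qed.

Lemma pbar_prod_M (e : nat -> nat) :
  eqm m (pbar m (\prod_(s <- T) M s ^+ e s))
        (\prod_(s <- T) pbar_unit s ^+ e s * \prod_(s <- T) M s ^+ e (negrep s)).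
Proof.
have -> : \prod_(s <- T) M s ^+ e (negrep s) = \prod_(s <- T) M (negrep s) ^+ e s.
  rewrite -(big_negrep l_gt0 q_coprime _ (fun s => M (negrep s) ^+ e s)).
  by rewrite big_seq [RHS]big_seq; apply: eq_bigr => s sT; rewrite negrepK.
apply: eqm_trans (pbar_prod m_gt0 _ _ _) _.
rewrite -big_split /= big_seq [X in eqm _ _ X]big_seq; apply: eqm_prod => s sT.
by apply: eqm_trans (pbarX m_gt0 _ _) _; rewrite -exprMn; apply/eqmX/pbar_M.
Qed.

Lemma pbar_prod_M_annihilator (e : nat -> nat) :
  (forall s, s \in T -> (e s <= p ^ t)%N) ->
  forall h, eqm m (h * pbar m (\prod_(s <- T) M s ^+ e s)) 0 <->
            \prod_(s <- T) M s ^+ (p ^ t - e (negrep s)) %| h.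
Proof.
move=> e_le; apply: (eqm_mul0P m_gt0 _ _ (pbar_prod_M e)).
  rewrite xm1_prod -big_split /= big_seq [RHS]big_seq; apply: eq_bigr => s sT.
  by rewrite -exprD subnK ?e_le ?(negrep_Tl l_gt0 q_coprime).
by rewrite big_seq; apply: unitm_prod => s sT; apply/unitmX/unitm_pbar_unit.
Qed.

End CyclotomicFactors.

Unset Implicit Arguments. Set Strict Implicit.

Theorem mainTheorem15
  (F : finFieldType) (p t l m : nat)
  (L : fieldType) (phi : {rmorphism F -> L}) (alpha : L)
  (M : nat -> {poly F})
  (v1 v2 : {poly F}) (r1 r2 : nat -> nat) :
  p \in [pchar F] ->
  (1 <= t)%N -> (1 <= l)%N -> coprime l p -> m = (l * p ^ t)%N ->
  l.-primitive_root alpha ->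
  (forall s, s \in Tl #|F| l ->
     map_poly phi (M s) =
       \prod_(i in cyc_coset #|F| l s) ('X - (alpha ^+ i)%:P)) ->
  coprimep (v1 * v2 - 1) ('X^m - 1) ->
  (forall s, s \in Tl #|F| l ->
     [/\ (0 < r1 s)%N, (r1 s < r2 s)%N &
         (r2 s < p ^ t - r2 (negrep #|F| l s))%N]) ->
  let P1 := \prod_(s <- Tl #|F| l) M s ^+ r1 s in
  let P2 := \prod_(s <- Tl #|F| l) M s ^+ r2 s in
  let Q1 := \prod_(s <- Tl #|F| l) M s ^+ (p ^ t - r1 (negrep #|F| l s)) in
  let Q2 := \prod_(s <- Tl #|F| l) M s ^+ (p ^ t - r2 (negrep #|F| l s)) in
  let C := QC_code m P1 (v1 * P1) (v2 * P2) P2 in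
  (forall c, edual m C c <->
     QC_code m Q1 (- pbar m v2 * Q1) (- pbar m v1 * Q2) Q2 c) /\
  (forall c, edual m C c -> C c).
Proof.
(* The proof does not use t >= 1. *)
move=> pF _ l_gt0 lp_coprime mE prim map_M v_coprime r_bounds P1 P2 Q1 Q2 C.
have q_coprime : coprime #|F| l.
  by rewrite (card_pprimeChar pF) coprimeXl // coprime_sym.
have m_gt0 : (0 < m)%N.
  by rewrite mE muln_gt0 l_gt0 expn_gt0 prime_gt0 // (pcharf_prime pF).
have r_le s : s \in Tl #|F| l ->
    [/\ (r1 s <= r2 s)%N, (r2 s <= p ^ t)%N,
        (r2 s <= p ^ t - r1 (negrep #|F| l s))%N &
        (r2 s <= p ^ t - r2 (negrep #|F| l s))%N].
  move=> sT; have [_ lt12 lt2] := r_bounds s sT.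
  have [_ lt12' _] := r_bounds _ (negrep_Tl l_gt0 q_coprime s).
  by split; lia.
have r1_le s : s \in Tl #|F| l -> (r1 s <= p ^ t)%N.
  by move=> /r_le[r12 r2_le _ _]; apply: leq_trans r12 r2_le.
have r2_le s : s \in Tl #|F| l -> (r2 s <= p ^ t)%N by case/r_le.
have annihilator := pbar_prod_M_annihilator l_gt0 q_coprime pF mE prim map_M.
have v_unit : unitm m (1 - v1 * v2) by rewrite -opprB; apply/unitmN/coprimep_unitm.
have dual := edual_QC_code m_gt0 (annihilator r1 r1_le) (annihilator r2 r2_le) v_unit.
split=> // c /dual; apply: (QC_code_sub _ _ _ v_unit);
  by apply: dvdp_prod_exp => s /r_le[].
Qed.
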